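(* For every Lie–Leibniz triple $(\mathfrak g,V,\Theta)$, the Lie superalgebra $L=L(\mathfrak g,V,\Theta)$ is $(-2,2)$-transitive.
   Context: Ground field $\mathbb{K}=\mathbb{R}$ or $\mathbb{C}$; all spaces $\mathbb{Z}$-graded with parity equal to degree mod 2; subalgebras and ideals are graded. $G_\pm=\bigoplus_{k\ge1}G_{\pm k}$, $G_{m-}=\bigoplus_{k\le m}G_k$, $G_{n+}=\bigoplus_{k\ge n}G_k$. A Lie superalgebra $G$ is $(m,n)$-transitive if for $x\in G_{n+}$, $[G_-,x]=0$ implies $x=0$, and for $x\in G_{m-}$, $[G_+,x]=0$ implies $x=0$. A Lie–Leibniz triple $(\mathfrak g,V,\Theta)$ consists of a Lie algebra $\mathfrak g$, a $\mathfrak g$-module $V$ (action $x\cdot u$) and a linear map $\Theta:V\to\mathfrak g$ with $\Theta(\Theta(u)\cdot v)=[\Theta(u),\Theta(v)]$ for all $u,v$. Construction of $\mathbb U$: $\mathbb U_0=\mathfrak g$, $\mathbb U_1=V[-1]$ ($V$ in degree 1, odd), $\mathbb U_{-p+1}=\mathrm{Hom}(\mathbb U_1,\mathbb U_{-p+2})$ for $p\ge2$; brackets on $\mathbb U_{1-}$: Lie bracket on $\mathfrak g$, and recursively $[x,u]=x(u)$, $[u,x]=-(-1)^{|x|}x(u)$, $[x,y](u)=[x,y(u)]+(-1)^{|y|}[x(u),y]$ for $x,y\in\mathbb U_{0-}$, $u\in\mathbb U_1$, where $x(u)=x\cdot u$ for $x\in\mathfrak g$; $\mathbb U$ is the unique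 Lie superalgebra extending this semilocal Lie superalgebra with $\mathbb U_+$ free on $\mathbb U_1$. $\Theta$ is regarded as an element of $\mathbb U_{-1}$; $R_\Theta\subseteq\mathbb U_{-1}$ is the $\mathfrak g$-submodule generated by $\Theta$ under $x\cdot\phi=[x,\phi]$. Let $\sigma:\mathbb U_2\to\mathbb U_1$ be linear with $\sigma([u,v])=\tfrac12(\Theta(u)\cdot v+\Theta(v)\cdot u)$, and $K$ the sum of all $\mathfrak g$-submodules of $\mathbb U_2$ contained in $\ker\sigma$. Construction of $L$: let $\mathbb S$ be the subalgebra of $\mathbb U$ generated by $R_\Theta\oplus\mathfrak g\oplus\mathbb U_1$; let $\mathscr K$ be the ideal of $\mathbb S$ generated by $K$ (it is contained in $\mathbb U_{2+}$); $\mathbb T=\mathbb S/\mathscr K$; and $L(\mathfrak g,V,\Theta)=\mathbb T/J$, where $J$ is the sum of all ideals of $\mathbb T$ contained in $\mathbb T_{3+}$. *)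

From HB Require Import structures.
From mathcomp Require Import all_boot all_order all_algebra.
From mathcomp Require Export reals complex.
Set Implicit Arguments.
Unset Strict Implicit.
Unset Printing Implicit Defensive.
Import Order.TTheory GRing.Theory Num.Theory.
Local Open Scope ring_scope.

Section LieLeibniz.
Variable K : fieldType.

Definition is_lin (A B : lmodType K) (f : A -> B) : Prop :=
  forall (a : K) x y, f (a *: x + y) = a *: f x + f y.

Definition is_bilin (A B C : lmodType K) (f : A -> B -> C) : Prop :=
  (forall (a : K) x x' y, f (a *: x + x') y = a *: f x y + f x' y) /\
  (forall (a : K) x y y', f x (a *: y + y') = a *: f x y + f x y').

Definition is_subspace (A : lmodType K) (P : A -> Prop) : Prop :=
  P 0 /\ forall (a : K) x y, P x -> P y -> P (a *: x + y).

Definition lie_algebra (g : lmodType K) (bg : g -> g -> g) : Prop :=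
  is_bilin bg /\ (forall x, bg x x = 0) /\
  (forall x y z, bg x (bg y z) + bg y (bg z x) + bg z (bg x y) = 0).

Definition lie_module (g : lmodType K) (bg : g -> g -> g)
    (V : lmodType K) (act : g -> V -> V) : Prop :=
  is_bilin act /\
  (forall x y v, act (bg x y) v = act x (act y v) - act y (act x v)).

Definition lie_leibniz_triple (g : lmodType K) (bg : g -> g -> g)
    (V : lmodType K) (act : g -> V -> V) (Th : V -> g) : Prop :=
  [/\ lie_algebra bg, lie_module bg act, is_lin Th &
      forall u v, Th (act (Th u) v) = bg (Th u) (Th v)].

(* A Z-graded Lie superalgebra is a vector space U with a family of
   subspaces Ug k (the homogeneous component of degree k), U being their
   direct sum, and a bilinear bracket satisfying the graded super
   antisymmetry and super Jacobi identity, parity being degree mod 2. *)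
Definition psign (i j : int) : K :=
  if odd `|i|%N && odd `|j|%N then -1 else 1.

Record graded_lie_super (U : lmodType K) (Ug : int -> U -> Prop)
    (br : U -> U -> U) : Prop := {
  gls_sub : forall k, is_subspace (Ug k);
  gls_span : forall x, exists s : seq (int * U),
      (forall p, p \in s -> Ug p.1 p.2) /\ x = \sum_(p <- s) p.2;
  gls_indep : forall (s : seq int) (f : int -> U), uniq s ->
      (forall k, k \in s -> Ug k (f k)) -> \sum_(k <- s) f k = 0 ->
      forall k, k \in s -> f k = 0;
  gls_bilin : is_bilin br;
  gls_deg : forall i j x y, Ug i x -> Ug j y -> Ug (i + j) (br x y);
  gls_anti : forall i j x y, Ug i x -> Ug j y ->
      br x y = - (psign i j *: br y x);
  gls_jacobi : forall i j x y z, Ug i x -> Ug j y ->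
      br x (br y z) = br (br x y) z + psign i j *: br y (br x z)
}.

Section Graded.
Variables (U : lmodType K) (Ug : int -> U -> Prop) (br : U -> U -> U).

Definition Ugeq (n : int) (x : U) : Prop :=
  exists s : seq (int * U),
    (forall p, p \in s -> n <= p.1 /\ Ug p.1 p.2) /\ x = \sum_(p <- s) p.2.
Definition Uleq (m : int) (x : U) : Prop :=
  exists s : seq (int * U),
    (forall p, p \in s -> p.1 <= m /\ Ug p.1 p.2) /\ x = \sum_(p <- s) p.2.

Definition is_graded (P : U -> Prop) : Prop :=
  forall x, P x -> exists s : seq (int * U),
    (forall p, p \in s -> Ug p.1 p.2 /\ P p.2) /\ x = \sum_(p <- s) p.2.

Definition is_subalgebra (P : U -> Prop) : Prop :=
  [/\ is_subspace P, is_graded P & forall x y, P x -> P y -> P (br x y)].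

Definition gen_subalg (G : U -> Prop) (x : U) : Prop :=
  forall P, is_subalgebra P -> (forall y, G y -> P y) -> P x.

Definition is_ideal_of (A I : U -> Prop) : Prop :=
  [/\ is_subspace I, is_graded I, (forall x, I x -> A x) &
      forall x y, A x -> I y -> I (br x y) /\ I (br y x)].

Definition gen_ideal (A G : U -> Prop) (x : U) : Prop :=
  forall I, is_ideal_of A I -> (forall y, G y -> I y) -> I x.

Definition sum_of_family (F : (U -> Prop) -> Prop) (x : U) : Prop :=
  exists s : seq U, (forall y, y \in s -> exists W, F W /\ W y) /\
                    x = \sum_(y <- s) y.

(* The quotient Lie superalgebra A / Z (A a graded subalgebra of U, Z a
   graded ideal of A) is (m,n)-transitive.  Elements of (A/Z)_{n+} are the
   classes of elements of A /\ U_{n+}, etc., and a class vanishes iff its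
   representative lies in Z. *)
Definition quot_transitive (A Z : U -> Prop) (m n : int) : Prop :=
  (forall x, A x -> Ugeq n x ->
     (forall y, A y -> Uleq (-1) y -> Z (br y x)) -> Z x) /\
  (forall x, A x -> Uleq m x ->
     (forall y, A y -> Ugeq 1 y -> Z (br y x)) -> Z x).
End Graded.

(* (U, Ug, br) together with the identifications i0 : g ~ U_0 and
   i1 : V ~ U_1 is the Lie superalgebra U of the paper:
   U_0 = g, U_1 = V[-1], U_{-p+1} = Hom(U_1, U_{-p+2}) (p >= 2) via
   x |-> x(u) = [x,u], brackets on U_{1-} as prescribed, and U_+ free
   on U_1. *)
Definition is_U (g : lmodType K) (bg : g -> g -> g) (V : lmodType K)
    (act : g -> V -> V) (U : lmodType K) (Ug : int -> U -> Prop)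
    (br : U -> U -> U) (i0 : g -> U) (i1 : V -> U) : Prop :=
  [/\ graded_lie_super Ug br,
      [/\ is_lin i0, injective i0, (forall x, Ug 0 x <-> exists a, x = i0 a)
        & forall a b, br (i0 a) (i0 b) = i0 (bg a b)],
      [/\ is_lin i1, injective i1, (forall x, Ug 1 x <-> exists v, x = i1 v)
        & forall a v, br (i0 a) (i1 v) = i1 (act a v)],
      (* U_k = Hom(U_1, U_{k+1}) for k <= -1, via x |-> [x, -] *)
      (forall k : int, k <= -1 ->
         (forall x, Ug k x -> (forall v, br x (i1 v) = 0) -> x = 0) /\
         (forall f : V -> U, is_lin f -> (forall v, Ug (k + 1) (f v)) ->
            exists x, Ug k x /\ forall v, br x (i1 v) = f v))
    & (* U_+ is free on U_1: generated by U_1, with the universal property *)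
      (forall x, Ugeq Ug 1 x -> gen_subalg Ug br (fun y => exists v, y = i1 v) x) /\
      (forall (M : lmodType K) (Mg : int -> M -> Prop) (mbr : M -> M -> M),
         graded_lie_super Mg mbr ->
         forall f : V -> M, is_lin f -> (forall v, Mg 1 (f v)) ->
         exists phi : U -> M,
           [/\ is_lin phi, (forall v, phi (i1 v) = f v),
               (forall k x, 1 <= k -> Ug k x -> Mg k (phi x)) &
               forall x y, Ugeq Ug 1 x -> Ugeq Ug 1 y ->
                 phi (br x y) = mbr (phi x) (phi y)])].

(* Everything is expressed inside U: S is a subset of U, and the ideals
   of T = S / KK and of L = T / J are represented by their preimages in S. *)
Definition L_transitive (g : lmodType K) (bg : g -> g -> g) (V : lmodType K)
    (act : g -> V -> V) (Th : V -> g) (m n : int) : Prop :=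
  forall (U : lmodType K) (Ug : int -> U -> Prop) (br : U -> U -> U)
         (i0 : g -> U) (i1 : V -> U),
  is_U bg act Ug br i0 i1 ->
  (* Theta regarded as an element of U_{-1} *)
  forall theta : U, Ug (-1) theta -> (forall v, br theta (i1 v) = i0 (Th v)) ->
  forall sigma : U -> V,
  (forall (a : K) x y, Ug 2 x -> Ug 2 y -> sigma (a *: x + y) = a *: sigma x + sigma y) ->
  (forall u v, sigma (br (i1 u) (i1 v)) = 2%:R^-1 *: (act (Th u) v + act (Th v) u)) ->
  let gmod (W : U -> Prop) := forall a y, W y -> W (br (i0 a) y) in
  let RTh x := forall P, is_subspace P -> P theta -> gmod P -> P x in
  let S := gen_subalg Ug br (fun y => [\/ RTh y, exists a, y = i0 a | exists v, y = i1 v]) in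
  let KK := sum_of_family (fun W => [/\ is_subspace W, gmod W &
               forall y, W y -> Ug 2 y /\ sigma y = 0]) in
  let sK := gen_ideal Ug br S KK in
  (* preimage in S of J = sum of all ideals of T = S/sK contained in T_{3+} *)
  let J := sum_of_family (fun I => [/\ is_ideal_of Ug br S I,
               (forall z, sK z -> I z) &
               forall z, I z -> exists a b, [/\ S a, Ugeq Ug 3 a, sK b & z = a + b]]) in
  quot_transitive Ug br S J m n.

End LieLeibniz.

From mathcomp Require Import all_boot all_order all_algebra reals complex zify.
From Stdlib Require Import ClassicalEpsilon.

(* Both transitivity conditions are decided by degree bookkeeping in U once
   one knows that every element of J = S_{3+} + (ideal generated by K) has
   degree >= 2, which holds because ad(R_Θ) annihilates K and U_2 is spanned
   by brackets [U_1, U_1].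

   For m = -2: if x ∈ S_{<= -2} and [U_1, x] ⊆ J, each [u, x_k] has degree
   k + 1 <= -1, hence vanishes, and since U_k = Hom(U_1, U_{k+1}) this forces
   x_k = 0.

   For n = 2: if x ∈ S_{>= 2} and [S_-, x] ⊆ J, the ideal I of S generated by
   J and the components of x is spanned by J and by iterated brackets of
   nonnegative-degree elements of S with the x_k, because brackets with
   negative-degree elements can be pushed inside by the Jacobi identity until
   they hit some x_k.  Its degree-2 part W satisfies [S_-, W] ⊆ J and is a
   g-module, and [Θ, w] = 2σ(w) has degree 1, so σ(W) = 0 and W ⊆ K.  Hence
   I lies in S_{3+} plus the ideal generated by K, i.e. I is one of the
   ideals summed in J, and x ∈ J. *)

Set Implicit Arguments.
Unset Strict Implicit.
Unset Printing Implicit Defensive.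
Import Order.TTheory GRing.Theory Num.Theory.
Local Open Scope ring_scope.

Section LinearAlgebra.
Variable K : fieldType.

Section Linear.
Variables (A B : lmodType K) (f : A -> B).
Hypothesis f_lin : is_lin f.

Lemma islin0 : f 0 = 0.
Proof.
have := f_lin 1 0 0; rewrite !scale1r addr0 => f00.
by apply: (@addrI _ (f 0)); rewrite addr0 -f00.
Qed.

Lemma islinD x y : f (x + y) = f x + f y.
Proof. by have := f_lin 1 x y; rewrite !scale1r. Qed.

Lemma islinZ a x : f (a *: x) = a *: f x.
Proof. by have := f_lin a x 0; rewrite !addr0 islin0 addr0. Qed.

Lemma islin_sum (I : Type) (r : seq I) (P : pred I) (F : I -> A) :
  f (\sum_(i <- r | P i) F i) = \sum_(i <- r | P i) f (F i).
Proof. exact: (big_morph f islinD islin0). Qed.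
End Linear.

Section Bilinear.
Variables (A B C : lmodType K) (f : A -> B -> C).
Hypothesis f_bilin : is_bilin f.

Lemma isbilin_l y : is_lin (f^~ y).
Proof. by move=> a x x'; apply: f_bilin.1. Qed.

Lemma isbilin_r x : is_lin (f x).
Proof. by move=> a y y'; apply: f_bilin.2. Qed.
End Bilinear.

Section Subspace.
Variables (A : lmodType K) (P : A -> Prop).
Hypothesis P_sub : is_subspace P.

Lemma subspace0 : P 0. Proof. exact: P_sub.1. Qed.

Lemma subspaceD x y : P x -> P y -> P (x + y).
Proof. by move=> Px Py; have := P_sub.2 1 x y Px Py; rewrite scale1r. Qed.

Lemma subspaceZ a x : P x -> P (a *: x).
Proof. by move=> Px; have := P_sub.2 a x 0 Px subspace0; rewrite addr0. Qed.

Lemma subspaceN x : P x -> P (- x).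
Proof. by move=> Px; rewrite -scaleN1r; apply: subspaceZ. Qed.

Lemma subspaceB x y : P x -> P y -> P (x - y).
Proof. by move=> Px Py; apply: subspaceD => //; apply: subspaceN. Qed.

Lemma subspace_sum (I : Type) (r : seq I) (Q : pred I) (F : I -> A) :
  (forall i, Q i -> P (F i)) -> P (\sum_(i <- r | Q i) F i).
Proof. by move=> PF; apply: big_ind => //; [exact: subspace0 | exact: subspaceD]. Qed.

Lemma subspace_sum_seq (I : eqType) (r : seq I) (Q : pred I) (F : I -> A) :
  (forall i, i \in r -> Q i -> P (F i)) -> P (\sum_(i <- r | Q i) F i).
Proof.
move=> PF; rewrite big_seq_cond; apply: subspace_sum => i /andP[]; exact: PF.
Qed.
End Subspace.
End LinearAlgebra.

Lemma sum_uniq_pred1 (A : zmodType) (I : eqType) (r : seq I) (j : I) (F : I -> A) :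
  uniq r -> \sum_(i <- r) (if i == j then F i else 0) = if j \in r then F j else 0.
Proof.
elim: r => [|i r IHr] /=; first by rewrite big_nil.
move=> /andP[i_r uniq_r]; rewrite big_cons IHr // in_cons.
case: eqP => [<-|ne_ij]; last by rewrite add0r eq_sym; case: eqP.
by rewrite eqxx /= (negbTE i_r) addr0.
Qed.

Section Graded.
Variables (K : fieldType) (U : lmodType K) (Ug : int -> U -> Prop) (br : U -> U -> U).
Hypothesis HG : graded_lie_super Ug br.

Let Ug_sub k : is_subspace (Ug k) := gls_sub HG k.

Definition hdec (x : U) : seq (int * U) :=
  proj1_sig (constructive_indefinite_description _ (gls_span HG x)).

Lemma hdec_hom x p : p \in hdec x -> Ug p.1 p.2.
Proof. exact: (proj1 (proj2_sig (constructive_indefinite_description _ (gls_span HG x)))). Qed.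

Lemma hdec_sum x : x = \sum_(p <- hdec x) p.2.
Proof. exact: (proj2 (proj2_sig (constructive_indefinite_description _ (gls_span HG x)))). Qed.

Definition hcomp k x := \sum_(p <- hdec x | p.1 == k) p.2.
Definition hsupp x := undup [seq p.1 | p <- hdec x].

Lemma sum_regroup (t : seq (int * U)) ks : uniq ks -> (forall p, p \in t -> p.1 \in ks) ->
  \sum_(p <- t) p.2 = \sum_(k <- ks) \sum_(p <- t | p.1 == k) p.2.
Proof.
move=> uniq_ks t_ks; under [RHS]eq_bigr => k _ do rewrite big_mkcond.
rewrite exchange_big /=; apply: eq_big_seq => p p_t.
rewrite (eq_bigr (fun k => if k == p.1 then p.2 else 0)); last by move=> k _; rewrite eq_sym.
by rewrite (@sum_uniq_pred1 _ _ ks p.1 (fun _ => p.2)) // t_ks.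
Qed.

Lemma sum_deg_notin (t : seq (int * U)) k : (forall p, p \in t -> p.1 != k) ->
  \sum_(p <- t | p.1 == k) p.2 = 0.
Proof.
move=> t_k; rewrite big_seq_cond big1 // => p /andP[p_t /eqP pk].
by move: (t_k p p_t); rewrite pk eqxx.
Qed.

Lemma hcomp_of_sum (t : seq (int * U)) x : (forall p, p \in t -> Ug p.1 p.2) ->
  x = \sum_(p <- t) p.2 -> forall k, hcomp k x = \sum_(p <- t | p.1 == k) p.2.
Proof.
move=> t_hom x_t k; rewrite /hcomp.
have s_hom := @hdec_hom x; have x_s := hdec_sum x; set s := hdec x in s_hom x_s *.
pose ks := undup [seq p.1 | p <- s ++ t].
pose f j := \sum_(p <- s | p.1 == j) p.2 - \sum_(p <- t | p.1 == j) p.2.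
have uniq_ks : uniq ks := undup_uniq _.
have st_ks p : p \in s ++ t -> p.1 \in ks by move=> p_st; rewrite mem_undup map_f.
have f_hom j : Ug j (f j).
  apply: subspaceB; first exact: Ug_sub.
    by apply: subspace_sum_seq => [|p p_s /eqP <-]; [exact: Ug_sub | exact: s_hom].
  by apply: subspace_sum_seq => [|p p_t /eqP <-]; [exact: Ug_sub | exact: t_hom].
have sum_f : \sum_(j <- ks) f j = 0.
  rewrite sumrB -!sum_regroup // => [|p p_t|p p_s]; first by rewrite -x_s -x_t subrr.
    by apply: st_ks; rewrite mem_cat p_t orbT.
  by apply: st_ks; rewrite mem_cat p_s.
case k_ks : (k \in ks).
  apply/eqP; rewrite -subr_eq0; apply/eqP.
  exact: (gls_indep HG uniq_ks (fun j _ => f_hom j) sum_f).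
by rewrite !sum_deg_notin // => p p_in; apply/eqP => pk; move: k_ks;
  rewrite -pk st_ks // mem_cat p_in ?orbT.
Qed.

Lemma hcomp_hom k x : Ug k x -> forall j, hcomp j x = if j == k then x else 0.
Proof.
move=> x_k j; rewrite (@hcomp_of_sum [:: (k, x)] x) ?big_cons ?big_nil /=.
- by rewrite eq_sym; case: eqP; rewrite ?addr0.
- by move=> p; rewrite inE => /eqP ->.
- by rewrite addr0.
Qed.

Lemma hcomp_id k x : Ug k x -> hcomp k x = x.
Proof. by move=> x_k; rewrite (hcomp_hom x_k) eqxx. Qed.

Lemma hcomp_ne k j x : Ug k x -> j != k -> hcomp j x = 0.
Proof. by move=> x_k jk; rewrite (hcomp_hom x_k) (negbTE jk). Qed.

Lemma hcomp_deg k x : Ug k (hcomp k x).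
Proof.
apply: subspace_sum_seq => [|p p_x /eqP <-]; [exact: Ug_sub | exact: hdec_hom p_x].
Qed.

Lemma hcomp_hcomp j k x : hcomp j (hcomp k x) = if j == k then hcomp k x else 0.
Proof. exact: (hcomp_hom (hcomp_deg k x)). Qed.

Lemma hcomp_lin k : is_lin (hcomp k).
Proof.
move=> a x y.
rewrite (@hcomp_of_sum ([seq (p.1, a *: p.2) | p <- hdec x] ++ hdec y) (a *: x + y)).
- by rewrite big_cat big_map /= scaler_sumr.
- move=> p; rewrite mem_cat => /orP[/mapP[q q_x ->]|p_y]; last exact: hdec_hom p_y.
  by apply: subspaceZ; [exact: Ug_sub | exact: hdec_hom q_x].
- by rewrite big_cat big_map /= -scaler_sumr -!hdec_sum.
Qed.

Lemma hcomp0 k : hcomp k 0 = 0.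
Proof. exact: (islin0 (hcomp_lin k)). Qed.

Lemma hsupp_uniq x : uniq (hsupp x). Proof. exact: undup_uniq. Qed.

Lemma sum_hcomp x : x = \sum_(k <- hsupp x) hcomp k x.
Proof.
rewrite {1}(hdec_sum x) (@sum_regroup (hdec x) (hsupp x) (hsupp_uniq x)) //.
by move=> p p_x; rewrite mem_undup map_f.
Qed.

Lemma hcomp_notin_hsupp k x : k \notin hsupp x -> hcomp k x = 0.
Proof.
move=> k_x; rewrite /hcomp sum_deg_notin // => p p_x; apply/eqP => pk; move: k_x.
by rewrite -pk mem_undup map_f.
Qed.

Let brl y : is_lin (br^~ y) := isbilin_l (gls_bilin HG) y.
Let brr x : is_lin (br x) := isbilin_r (gls_bilin HG) x.

Lemma hcomp_brl d y x k : Ug d y -> hcomp k (br y x) = br y (hcomp (k - d) x).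
Proof.
move=> y_d; rewrite (@hcomp_of_sum [seq (d + j, br y (hcomp j x)) | j <- hsupp x] (br y x)).
- rewrite big_map /= (eq_bigl (fun j => j == k - d)); last first.
    by move=> j; rewrite [RHS]eq_sym subr_eq addrC eq_sym.
  rewrite big_mkcond /= (@sum_uniq_pred1 _ _ _ _ (fun j => br y (hcomp j x))) ?hsupp_uniq //.
  by case: ifP => // /negbT kd_x; rewrite hcomp_notin_hsupp // (islin0 (brr y)).
- by move=> p /mapP[j _ ->] /=; exact: (gls_deg HG y_d (hcomp_deg j x)).
- by rewrite big_map -(islin_sum (brr y)) -sum_hcomp.
Qed.

Lemma hcomp_brr d y x k : Ug d y -> hcomp k (br x y) = br (hcomp (k - d) x) y.
Proof.
move=> y_d; rewrite (@hcomp_of_sum [seq (j + d, br (hcomp j x) y) | j <- hsupp x] (br x y)).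
- rewrite big_map /= (eq_bigl (fun j => j == k - d)); last first.
    by move=> j; rewrite [RHS]eq_sym subr_eq eq_sym.
  rewrite big_mkcond /= (@sum_uniq_pred1 _ _ _ _ (fun j => br (hcomp j x) y)) ?hsupp_uniq //.
  by case: ifP => // /negbT kd_x; rewrite hcomp_notin_hsupp // (islin0 (brl y)).
- by move=> p /mapP[j _ ->] /=; exact: (gls_deg HG (hcomp_deg j x) y_d).
- by rewrite big_map -(islin_sum (brl y)) -sum_hcomp.
Qed.

Lemma br_hcomp_sum y z :
  br y z = \sum_(i <- hsupp y) \sum_(j <- hsupp z) br (hcomp i y) (hcomp j z).
Proof.
rewrite {1}(sum_hcomp y) (islin_sum (brl z)); apply: eq_bigr => i _.
by rewrite {1}(sum_hcomp z) (islin_sum (brr _)).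
Qed.

Lemma hcomp_br_sum k y z :
  hcomp k (br y z) = \sum_(i <- hsupp y) br (hcomp i y) (hcomp (k - i) z).
Proof.
rewrite {1}(sum_hcomp y) (islin_sum (brl z)) (islin_sum (hcomp_lin k)).
by apply: eq_bigr => i _; rewrite (hcomp_brl _ _ (hcomp_deg i y)).
Qed.

Definition hstable (P : U -> Prop) := forall k x, P x -> P (hcomp k x).

Lemma hstable_graded P : hstable P -> is_graded Ug P.
Proof.
move=> P_st x Px; exists [seq (k, hcomp k x) | k <- hsupp x]; split.
  by move=> p /mapP[k _ ->] /=; split; [exact: hcomp_deg | exact: P_st].
by rewrite big_map /= -sum_hcomp.
Qed.

Lemma graded_hstable P : is_subspace P -> is_graded Ug P -> hstable P.
Proof.
move=> P_sub P_gr k x /P_gr[s [s_hom ->]].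
rewrite (@hcomp_of_sum s) //; last by move=> p /s_hom[].
by apply: subspace_sum_seq => // p p_s _; case: (s_hom p p_s).
Qed.

Lemma Ugeq_hcomp n x : Ugeq Ug n x -> forall k, k < n -> hcomp k x = 0.
Proof.
move=> [t [t_hom ->]] k kn; rewrite (@hcomp_of_sum t) //; last by move=> p /t_hom[].
by apply: sum_deg_notin => p /t_hom[np _]; apply: contraTneq kn => <-; rewrite -leNgt.
Qed.

Lemma hcomp_Ugeq n x : (forall k, k < n -> hcomp k x = 0) -> Ugeq Ug n x.
Proof.
move=> x_lt; exists [seq (k, hcomp k x) | k <- [seq k <- hsupp x | n <= k]]; split.
  move=> p /mapP[k]; rewrite mem_filter => /andP[nk _] -> /=.
  by split => //; exact: hcomp_deg.
rewrite big_map big_filter /= {1}(sum_hcomp x) (bigID (fun k => n <= k)) /=.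
by rewrite [X in _ + X]big1 ?addr0 // => k; rewrite -ltNge => /x_lt.
Qed.

Lemma Ugeq_hom n k x : Ug k x -> n <= k -> Ugeq Ug n x.
Proof.
move=> x_k nk; exists [:: (k, x)]; split; last by rewrite big_seq1.
by move=> p; rewrite inE => /eqP ->.
Qed.

Lemma Uleq_hcomp m x : Uleq Ug m x -> forall k, m < k -> hcomp k x = 0.
Proof.
move=> [t [t_hom ->]] k mk; rewrite (@hcomp_of_sum t) //; last by move=> p /t_hom[].
by apply: sum_deg_notin => p /t_hom[pm _]; apply: contraTneq mk => <-; rewrite -leNgt.
Qed.

Lemma Uleq_hom m k x : Ug k x -> k <= m -> Uleq Ug m x.
Proof.
move=> x_k km; exists [:: (k, x)]; split; last by rewrite big_seq1.
by move=> p; rewrite inE => /eqP ->.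
Qed.

Lemma hstable_subalgebra (P : U -> Prop) : is_subspace P -> hstable P ->
  (forall i j y z, Ug i y -> Ug j z -> P y -> P z -> P (br y z)) ->
  is_subalgebra Ug br P.
Proof.
move=> P_sub P_st P_br; split => //; first exact: hstable_graded.
move=> y z Py Pz; rewrite br_hcomp_sum; apply: subspace_sum => // i _.
apply: subspace_sum => // j _.
exact: P_br (hcomp_deg i y) (hcomp_deg j z) (P_st _ _ Py) (P_st _ _ Pz).
Qed.

Lemma subalgebra_hstable (P : U -> Prop) : is_subalgebra Ug br P -> hstable P.
Proof. by case=> P_sub P_gr _; apply: graded_hstable. Qed.

Lemma hstable_ideal (A P : U -> Prop) : hstable A ->
  is_subspace P -> hstable P -> (forall x, P x -> A x) ->
  (forall d y z, A y -> Ug d y -> P z -> P (br y z)) -> is_ideal_of Ug br A P.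
Proof.
move=> A_st P_sub P_st PA P_br; split => //; first exact: hstable_graded.
move=> y z Ay Pz; split.
  rewrite {1}(sum_hcomp y) (islin_sum (brl z)); apply: subspace_sum => // i _.
  exact: P_br (A_st _ _ Ay) (hcomp_deg i y) Pz.
rewrite br_hcomp_sum; apply: subspace_sum => // i _; apply: subspace_sum => // j _.
rewrite (gls_anti HG (hcomp_deg i z) (hcomp_deg j y)).
apply: subspaceN => //; apply: subspaceZ => //.
exact: P_br (A_st _ _ Ay) (hcomp_deg j y) (P_st _ _ Pz).
Qed.

End Graded.

Section LieLeibnizQuotient.
Variable K : fieldType.
Hypothesis two_neq0 : (2%:R : K) != 0.
Variables (g : lmodType K) (bg : g -> g -> g) (V : lmodType K) (act : g -> V -> V) (Th : V -> g).
Variables (U : lmodType K) (Ug : int -> U -> Prop) (br : U -> U -> U) (i0 : g -> U) (i1 : V -> U).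
Hypothesis HU : is_U bg act Ug br i0 i1.
Variable theta : U.
Hypothesis theta_deg : Ug (-1) theta.
Hypothesis br_theta_i1 : forall v, br theta (i1 v) = i0 (Th v).
Variable sigma : U -> V.
Hypothesis sigma_lin : forall (a : K) x y, Ug 2 x -> Ug 2 y ->
  sigma (a *: x + y) = a *: sigma x + sigma y.
Hypothesis sigma_br : forall u v,
  sigma (br (i1 u) (i1 v)) = 2%:R^-1 *: (act (Th u) v + act (Th v) u).

Let HG : graded_lie_super Ug br. Proof. by case: HU. Qed.
Let Ug0E x : Ug 0 x <-> exists a, x = i0 a. Proof. by case: HU => _ []. Qed.
Let i1_lin : is_lin i1. Proof. by case: HU => _ _ []. Qed.
Let i1_inj : injective i1. Proof. by case: HU => _ _ []. Qed.
Let Ug1E x : Ug 1 x <-> exists v, x = i1 v. Proof. by case: HU => _ _ []. Qed.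
Let br_i0_i1 a v : br (i0 a) (i1 v) = i1 (act a v). Proof. by case: HU => _ _ []. Qed.
Let Ug_neg_eq0 (k : int) : k <= -1 -> forall x, Ug k x -> (forall v, br x (i1 v) = 0) -> x = 0.
Proof. by move=> k_neg; case: HU => _ _ _ U_neg _; exact: (U_neg k k_neg).1. Qed.
Let Ugeq1_gen x : Ugeq Ug 1 x -> gen_subalg Ug br (fun y => exists v, y = i1 v) x.
Proof. by case: HU => _ _ _ _ [U_free _]; apply: U_free. Qed.

Local Notation hcomp := (hcomp HG).
Local Notation hsupp := (hsupp HG).
Local Notation hstable := (hstable HG).

Let Ug_sub k : is_subspace (Ug k) := gls_sub HG k.
Let brl y : is_lin (br^~ y) := isbilin_l (gls_bilin HG) y.
Let brr x : is_lin (br x) := isbilin_r (gls_bilin HG) x.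

Lemma br0l y : br 0 y = 0. Proof. exact: (islin0 (brl y)). Qed.
Lemma br0r x : br x 0 = 0. Proof. exact: (islin0 (brr x)). Qed.
Lemma Ug0_i0 a : Ug 0 (i0 a). Proof. by apply/Ug0E; exists a. Qed.
Lemma Ug1_i1 v : Ug 1 (i1 v). Proof. by apply/Ug1E; exists v. Qed.
Lemma Ug2_br_i1 u v : Ug 2 (br (i1 u) (i1 v)).
Proof. exact: (gls_deg HG (Ug1_i1 u) (Ug1_i1 v)). Qed.

Lemma jacobi_l i j x y z : Ug i x -> Ug j y ->
  br (br x y) z = br x (br y z) - psign K i j *: br y (br x z).
Proof. by move=> x_i y_j; rewrite (gls_jacobi HG _ x_i y_j) addrK. Qed.

Definition gmod (W : U -> Prop) := forall a y, W y -> W (br (i0 a) y).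
Definition RTh x := forall P, is_subspace P -> P theta -> gmod P -> P x.

Lemma RTh_theta : RTh theta. Proof. by move=> P. Qed.

Lemma RTh_subspace : is_subspace RTh.
Proof.
split=> [P P_sub _ _|a x y Rx Ry P P_sub P_th P_g]; first exact: subspace0 P_sub.
exact: P_sub.2 (Rx P P_sub P_th P_g) (Ry P P_sub P_th P_g).
Qed.

Lemma RTh_gmod : gmod RTh.
Proof. by move=> a y Ry P P_sub P_th P_g; exact: P_g a y (Ry P P_sub P_th P_g). Qed.

Lemma RTh_deg x : RTh x -> Ug (-1) x.
Proof. by apply => // a y y_deg; have := gls_deg HG (Ug0_i0 a) y_deg; rewrite add0r. Qed.

Definition bracket_span w :=
  exists s : seq (V * V), w = \sum_(p <- s) br (i1 p.1) (i1 p.2).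

Lemma bracket_span_subspace : is_subspace bracket_span.
Proof.
split=> [|a x y [s ->] [t ->]]; first by exists [::]; rewrite big_nil.
exists ([seq (a *: p.1, p.2) | p <- s] ++ t); rewrite big_cat big_map scaler_sumr.
by congr (_ + _); apply: eq_bigr => p _ /=; rewrite (islinZ i1_lin) (islinZ (brl _)).
Qed.

Lemma bracket_span_br u v : bracket_span (br (i1 u) (i1 v)).
Proof. by exists [:: (u, v)]; rewrite big_seq1. Qed.

(* A subalgebra containing U_1, hence containing U_2 since U_+ is generated
   by U_1. *)
Definition deg2_bracket_span z :=
  (forall k, k <= 0 -> hcomp k z = 0) /\ bracket_span (hcomp 2 z).

Lemma deg2_bracket_span_subalgebra : is_subalgebra Ug br deg2_bracket_span.
Proof.
have span_sub := bracket_span_subspace.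
apply: hstable_subalgebra.
- split=> [|a x y [x_pos x2] [y_pos y2]].
    by split=> [k _|]; rewrite hcomp0 //; exact: subspace0.
  rewrite /deg2_bracket_span (hcomp_lin HG); split; last exact: span_sub.2.
  by move=> k k0; rewrite (hcomp_lin HG) x_pos // y_pos // scaler0 addr0.
- move=> j z [z_pos z2]; split=> [k k0|]; rewrite (hcomp_hcomp HG).
    by case: eqP => // <-; exact: z_pos.
  by case: eqP => [<-|_] //; exact: subspace0.
move=> i j y z _ _ [y_pos _] [z_pos _]; split=> [k k0|].
  rewrite hcomp_br_sum big1 // => i' _.
  have [i'_le0|i'_pos] := lerP i' 0; first by rewrite y_pos // br0l.
  by rewrite z_pos ?br0r //; lia.
rewrite hcomp_br_sum; apply: subspace_sum => // i' _.
have [i'_le0|i'_pos] := lerP i' 0; first by rewrite y_pos // br0l; exact: subspace0.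
have [i'_ge2|i'_lt2] := lerP 2 i'; first by rewrite z_pos ?br0r; [exact: subspace0 | lia].
have -> : i' = 1 by lia.
have [u ->] := proj1 (Ug1E _) (hcomp_deg HG 1 y).
have [v ->] := proj1 (Ug1E _) (hcomp_deg HG (2 - 1) z).
exact: bracket_span_br.
Qed.

Lemma U2_bracket_span w : Ug 2 w -> bracket_span w.
Proof.
move=> w2; have := Ugeq1_gen (Ugeq_hom w2 (isT : (1 <= 2 :> int))).
case/(_ _ deg2_bracket_span_subalgebra) => [_ [v ->]|_]; last by rewrite (hcomp_id HG w2).
split; last by rewrite (hcomp_ne HG (Ug1_i1 v)) //; exact: subspace0 bracket_span_subspace.
by move=> k k0; rewrite (hcomp_ne HG (Ug1_i1 v)) //; apply: contraTneq k0 => ->.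
Qed.

Lemma br_theta_bracket u v :
  br theta (br (i1 u) (i1 v)) = i1 (act (Th u) v + act (Th v) u).
Proof.
rewrite (gls_jacobi HG _ theta_deg (Ug1_i1 u)) !br_theta_i1 br_i0_i1.
rewrite (gls_anti HG (Ug1_i1 u) (Ug0_i0 (Th v))) br_i0_i1.
rewrite (_ : psign K (-1) 1 = -1) // (_ : psign K 1 0 = 1) // scale1r scaleN1r opprK.
by rewrite (islinD i1_lin).
Qed.

Lemma br_theta_U2 w : Ug 2 w -> br theta w = i1 (2%:R *: sigma w).
Proof.
move=> /U2_bracket_span [s ->].
have sigma_sum (t : seq (V * V)) :
    sigma (\sum_(p <- t) br (i1 p.1) (i1 p.2)) =
    \sum_(p <- t) 2%:R^-1 *: (act (Th p.1) p.2 + act (Th p.2) p.1).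
  have sum_deg (r : seq (V * V)) : Ug 2 (\sum_(p <- r) br (i1 p.1) (i1 p.2)).
    by apply: subspace_sum => // p _; exact: Ug2_br_i1.
  elim: t => [|p t IHt]; rewrite ?big_nil ?big_cons.
    have := sigma_lin 1 (subspace0 (Ug_sub 2)) (subspace0 (Ug_sub 2)).
    by rewrite !scale1r addr0 => s00; apply: (@addrI _ (sigma 0)); rewrite addr0 -s00.
  have := sigma_lin 1 (Ug2_br_i1 p.1 p.2) (sum_deg t).
  by rewrite !scale1r => ->; rewrite IHt sigma_br.
rewrite sigma_sum (islin_sum (brr theta)) -scaler_sumr scalerA mulfV // scale1r.
by rewrite (islin_sum i1_lin); apply: eq_bigr => p _; rewrite br_theta_bracket.
Qed.

Definition Kfam (W : U -> Prop) :=
  [/\ is_subspace W, gmod W & forall y, W y -> Ug 2 y /\ sigma y = 0].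
Definition KK := sum_of_family Kfam.

Lemma KK_deg k : KK k -> Ug 2 k.
Proof.
move=> [s [s_K ->]]; apply: subspace_sum_seq => // y y_s _.
by have [W [[_ _ W2] Wy]] := s_K y y_s; case: (W2 y Wy).
Qed.

Lemma KK_gmod : gmod KK.
Proof.
move=> a k [s [s_K ->]]; exists [seq br (i0 a) y | y <- s]; split.
  move=> _ /mapP[y y_s ->]; have [W [W_K Wy]] := s_K y y_s.
  by exists W; split=> //; case: W_K => _ W_g _; exact: W_g.
by rewrite big_map (islin_sum (brr _)).
Qed.

Lemma br_theta_KK k : KK k -> br theta k = 0.
Proof.
move=> [s [s_K ->]]; rewrite (islin_sum (brr _)) big_seq big1 // => y y_s.
have [W [[_ _ W2] Wy]] := s_K y y_s; have [y2 sigma_y] := W2 y Wy.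
by rewrite br_theta_U2 // sigma_y scaler0 (islin0 i1_lin).
Qed.

Lemma br_RTh_KK x k : RTh x -> KK k -> br x k = 0.
Proof.
move=> Rx; move: k; pose P x := Ug (-1) x /\ forall k, KK k -> br x k = 0.
suff : P x by case.
apply: Rx.
- split=> [|a y z [y_deg Py] [z_deg Pz]]; first by split=> [|k _]; [exact: subspace0 | exact: br0l].
  split=> [|k Kk]; first exact: (Ug_sub (-1)).2.
  by rewrite (islinD (brl k)) (islinZ (brl k)) Py // Pz // scaler0 addr0.
- by split=> //; exact: br_theta_KK.
move=> a y [y_deg Py]; split=> [|k Kk]; first by have := gls_deg HG (Ug0_i0 a) y_deg; rewrite add0r.
rewrite (jacobi_l _ (Ug0_i0 a) y_deg) (Py k Kk) (Py _ (KK_gmod a Kk)).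
by rewrite !br0r scaler0 subrr.
Qed.

Definition S_gens y := [\/ RTh y, exists a, y = i0 a | exists v, y = i1 v].
Definition S := gen_subalg Ug br S_gens.

Lemma S_subspace : is_subspace S.
Proof.
split=> [P [P_sub _ _] _|a x y Sx Sy P P_alg P_gen]; first exact: subspace0.
by case: (P_alg) => [P_sub _ _]; exact: P_sub.2 (Sx P P_alg P_gen) (Sy P P_alg P_gen).
Qed.

Lemma S_hstable : hstable S.
Proof. by move=> k x Sx P P_alg P_gen; apply: (subalgebra_hstable HG P_alg); exact: Sx. Qed.

Lemma S_br x y : S x -> S y -> S (br x y).
Proof.
move=> Sx Sy P P_alg P_gen; case: (P_alg) => _ _ P_br.
exact: P_br (Sx P P_alg P_gen) (Sy P P_alg P_gen).
Qed.

Lemma S_i0 a : S (i0 a). Proof. by move=> P _; apply; apply: Or32; exists a. Qed.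
Lemma S_i1 v : S (i1 v). Proof. by move=> P _; apply; apply: Or33; exists v. Qed.
Lemma S_RTh y : RTh y -> S y. Proof. by move=> Ry P _; apply; apply: Or31. Qed.

Lemma U2_S w : Ug 2 w -> S w.
Proof.
move=> /U2_bracket_span [s ->]; apply: subspace_sum; first exact: S_subspace.
by move=> p _; apply: S_br; exact: S_i1.
Qed.

Lemma S_ideal : is_ideal_of Ug br S S.
Proof.
apply: hstable_ideal => //; [exact: S_hstable | exact: S_subspace | exact: S_hstable |].
by move=> d y z Sy _ Sz; exact: S_br.
Qed.

(* An S-module containing K and concentrated in degrees >= 2: it bounds the
   ideal of S generated by K. *)
Inductive Kclosure : U -> Prop :=
| Kclosure_KK k : KK k -> Kclosure k
| Kclosure0 : Kclosure 0
| Kclosure_lin a x y : Kclosure x -> Kclosure y -> Kclosure (a *: x + y)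
| Kclosure_i0 a x : Kclosure x -> Kclosure (br (i0 a) x)
| Kclosure_i1 v x : Kclosure x -> Kclosure (br (i1 v) x).

Lemma Kclosure_subspace : is_subspace Kclosure.
Proof. by split=> [|a x y]; [exact: Kclosure0 | exact: Kclosure_lin]. Qed.

Lemma hcomp_Kclosure x k : Kclosure x -> k < 2 -> hcomp k x = 0.
Proof.
move=> Kx; elim: Kx k => [k' Kk'||a x' y _ IHx _ IHy|a x' _ IHx|v x' _ IHx] k k2.
- by apply: (hcomp_ne HG (KK_deg Kk')); apply: contraTneq k2 => ->.
- by rewrite hcomp0.
- by rewrite (hcomp_lin HG) IHx // IHy // scaler0 addr0.
- by rewrite (hcomp_brl HG _ _ (Ug0_i0 a)) IHx ?br0r //; lia.
- by rewrite (hcomp_brl HG _ _ (Ug1_i1 v)) IHx ?br0r //; lia.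
Qed.

Lemma Kclosure_hstable : hstable Kclosure.
Proof.
move=> k x Kx; elim: Kx k => [k' Kk'||a x' y _ IHx _ IHy|a x' _ IHx|v x' _ IHx] k.
- rewrite (hcomp_hom HG (KK_deg Kk')).
  by case: ifP => _; [apply: Kclosure_KK | apply: Kclosure0].
- by rewrite hcomp0; apply: Kclosure0.
- by rewrite (hcomp_lin HG); apply: Kclosure_lin.
- by rewrite (hcomp_brl HG _ _ (Ug0_i0 a)); apply: Kclosure_i0.
- by rewrite (hcomp_brl HG _ _ (Ug1_i1 v)); apply: Kclosure_i1.
Qed.

(* [R_Θ, g] ⊆ R_Θ and [R_Θ, U_1] ⊆ g, so the Jacobi identity reduces
   [R_Θ, Kclosure] to [R_Θ, K] = 0. *)
Lemma br_RTh_Kclosure x y : Kclosure x -> RTh y -> Kclosure (br y x).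
Proof.
move=> Kx; elim: Kx y => [k Kk||a x' y' _ IHx _ IHy|a x' Kx' IHx|v x' Kx' IHx] z Rz.
- by rewrite (br_RTh_KK Rz Kk); exact: Kclosure0.
- by rewrite br0r; exact: Kclosure0.
- by rewrite (islinD (brr z)) (islinZ (brr z)); apply: Kclosure_lin; [exact: IHx | exact: IHy].
- have z_deg := RTh_deg Rz.
  rewrite (gls_jacobi HG _ z_deg (Ug0_i0 a)); apply: (subspaceD Kclosure_subspace).
    apply: IHx; rewrite (gls_anti HG z_deg (Ug0_i0 a)).
    apply: (subspaceN RTh_subspace); apply: (subspaceZ RTh_subspace).
    exact: RTh_gmod.
  by apply: (subspaceZ Kclosure_subspace); apply: Kclosure_i0; exact: IHx.
- have z_deg := RTh_deg Rz.
  rewrite (gls_jacobi HG _ z_deg (Ug1_i1 v)); apply: (subspaceD Kclosure_subspace).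
    by have [b ->] := proj1 (Ug0E _) (gls_deg HG z_deg (Ug1_i1 v)); exact: Kclosure_i0.
  by apply: (subspaceZ Kclosure_subspace); apply: Kclosure_i1; exact: IHx.
Qed.

Lemma S_stabilizes_Kclosure y x : S y -> Kclosure x -> Kclosure (br y x).
Proof.
move=> Sy; move: x; apply: (Sy (fun y => forall x, Kclosure x -> Kclosure (br y x)))
  => [|y' [Ry'|[a ->]|[v ->]] x Kx].
- apply: hstable_subalgebra => [|d y' Py' x Kx|i j y1 y2 y1_i y2_j P1 P2 x Kx].
  + split=> [x _|a y1 y2 P1 P2 x Kx]; first by rewrite br0l; exact: Kclosure0.
    by rewrite (islinD (brl x)) (islinZ (brl x)); apply: Kclosure_lin; auto.
  + rewrite {1}(sum_hcomp HG x) (islin_sum (brr _)).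
    apply: subspace_sum => [|e _]; first exact: Kclosure_subspace.
    have := hcomp_brr HG y' (d + e) (hcomp_deg HG e x); rewrite addrK => <-.
    by apply: Kclosure_hstable; apply: Py'; apply: Kclosure_hstable.
  + rewrite (jacobi_l _ y1_i y2_j); apply: (subspaceB Kclosure_subspace); first by auto.
    by apply: (subspaceZ Kclosure_subspace); auto.
- exact: br_RTh_Kclosure.
- exact: Kclosure_i0.
- exact: Kclosure_i1.
Qed.

Definition sK := gen_ideal Ug br S KK.

Lemma KK_sK k : KK k -> sK k. Proof. by move=> Kk I _; apply. Qed.

Lemma sK_subspace : is_subspace sK.
Proof.
split=> [I [I_sub _ _ _] _|a x y Kx Ky I I_id I_K]; first exact: subspace0.
by case: (I_id) => I_sub _ _ _; exact: I_sub.2 (Kx I I_id I_K) (Ky I I_id I_K).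
Qed.

Lemma sK_hstable : hstable sK.
Proof.
move=> k z Kz I I_id I_K; case: (I_id) => I_sub I_gr _ _.
by apply: (graded_hstable HG I_sub I_gr); exact: Kz.
Qed.

Lemma sK_S z : sK z -> S z.
Proof. by apply; [exact: S_ideal | move=> k /KK_deg/U2_S]. Qed.

Lemma sK_ideal : is_ideal_of Ug br S sK.
Proof.
split; [exact: sK_subspace | exact: hstable_graded sK_hstable | exact: sK_S |].
move=> y z Sy Kz; split=> I I_id I_K; case: (I_id) => _ _ _ I_br.
  exact: (I_br y z Sy (Kz I I_id I_K)).1.
exact: (I_br y z Sy (Kz I I_id I_K)).2.
Qed.

Lemma sK_Kclosure z : sK z -> Kclosure z.
Proof.
move=> Kz; suff [] : S z /\ Kclosure z by [].
apply: (Kz (fun z => S z /\ Kclosure z)) => [|k Kk]; last first.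
  by split; [exact: U2_S (KK_deg Kk) | exact: Kclosure_KK].
apply: hstable_ideal => [||k x [Sx Kx]|x []|d y x Sy _ [Sx Kx]] //.
- exact: S_hstable.
- split=> [|a x y [Sx Kx] [Sy Ky]].
    by split; [exact: subspace0 S_subspace | exact: Kclosure0].
  by split; [exact: S_subspace.2 | exact: Kclosure_lin].
- by split; [exact: S_hstable | exact: Kclosure_hstable].
- by split; [exact: S_br | exact: S_stabilizes_Kclosure].
Qed.

Lemma hcomp_sK z k : sK z -> k < 2 -> hcomp k z = 0.
Proof. by move=> /sK_Kclosure; exact: hcomp_Kclosure. Qed.

Definition S3K z := exists a b, [/\ S a, Ugeq Ug 3 a, sK b & z = a + b].
Definition Jfam (I : U -> Prop) :=
  [/\ is_ideal_of Ug br S I, (forall z, sK z -> I z) & forall z, I z -> S3K z].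
Definition J := sum_of_family Jfam.

Lemma Ugeq3_0 : Ugeq Ug 3 0.
Proof. by apply: (@hcomp_Ugeq _ _ _ _ HG) => k _; exact: hcomp0. Qed.

Lemma S3K_subspace : is_subspace S3K.
Proof.
split=> [|c x y [a1 [b1 [S1 a1_3 K1 ->]]] [a2 [b2 [S2 a2_3 K2 ->]]]].
  exists 0, 0; split; [exact: subspace0 S_subspace | exact: Ugeq3_0 | |].
    exact: subspace0 sK_subspace.
  by rewrite addr0.
exists (c *: a1 + a2), (c *: b1 + b2); split.
- exact: S_subspace.2.
- apply: (@hcomp_Ugeq _ _ _ _ HG) => k k3.
  by rewrite (hcomp_lin HG) (Ugeq_hcomp HG a1_3) // (Ugeq_hcomp HG a2_3) // scaler0 addr0.
- exact: sK_subspace.2.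
- by rewrite scalerDr addrACA.
Qed.

Lemma J_of I z : Jfam I -> I z -> J z.
Proof.
move=> I_J Iz; exists [:: z]; split=> [y|]; last by rewrite big_seq1.
by rewrite inE => /eqP ->; exists I.
Qed.

Lemma J_subspace : is_subspace J.
Proof.
split=> [|a x y [s [s_J ->]] [t [t_J ->]]]; first by exists [::]; rewrite big_nil.
exists ([seq a *: w | w <- s] ++ t); split; last by rewrite big_cat big_map scaler_sumr.
move=> w; rewrite mem_cat => /orP[/mapP[w' w'_s ->]|]; last exact: t_J.
have [W [W_J Ww']] := s_J w' w'_s; exists W; split=> //.
by case: W_J => [[W_sub _ _ _] _ _]; exact: subspaceZ.
Qed.

Lemma J_hstable : hstable J.
Proof.
move=> k x [s [s_J ->]]; exists [seq hcomp k w | w <- s].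
split; last by rewrite big_map (islin_sum (hcomp_lin HG k)).
move=> _ /mapP[w w_s ->]; have [W [W_J Ww]] := s_J w w_s; exists W; split=> //.
by case: W_J => [[W_sub W_gr _ _] _ _]; apply: (graded_hstable HG W_sub W_gr).
Qed.

Lemma J_S z : J z -> S z.
Proof.
move=> [s [s_J ->]]; apply: subspace_sum_seq => [|w w_s _]; first exact: S_subspace.
by have [W [[[_ _ W_S _] _ _] Ww]] := s_J w w_s; exact: W_S.
Qed.

Lemma J_br y z : S y -> J z -> J (br y z).
Proof.
move=> Sy [s [s_J ->]]; exists [seq br y w | w <- s].
split; last by rewrite big_map (islin_sum (brr y)).
move=> _ /mapP[w w_s ->]; have [W [W_J Ww]] := s_J w w_s; exists W; split=> //.
by case: W_J => [[_ _ _ W_br] _ _]; exact: (W_br y w Sy Ww).1.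
Qed.

Lemma sK_Jfam : Jfam sK.
Proof.
split=> [||z Kz]; [exact: sK_ideal | by [] |].
by exists 0, z; split; [exact: subspace0 S_subspace | exact: Ugeq3_0 | | rewrite add0r].
Qed.

Lemma sK_J z : sK z -> J z. Proof. exact: J_of sK_Jfam. Qed.

Lemma J_S3K z : J z -> S3K z.
Proof.
move=> [s [s_J ->]]; apply: subspace_sum_seq => [|w w_s _]; first exact: S3K_subspace.
by have [W [[_ _ W_S3K] Ww]] := s_J w w_s; exact: W_S3K.
Qed.

Lemma hcomp_J z k : J z -> k < 2 -> hcomp k z = 0.
Proof.
move=> /J_S3K [a [b [_ a_3 Kb ->]]] k2.
by rewrite (islinD (hcomp_lin HG k)) (Ugeq_hcomp HG a_3) ?(hcomp_sK Kb) ?addr0 //; lia.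
Qed.

Lemma transitive_neg x : S x -> Uleq Ug (-2) x ->
  (forall y, S y -> Ugeq Ug 1 y -> J (br y x)) -> J x.
Proof.
move=> Sx x_le hJ; suff -> : x = 0 by exact: subspace0 J_subspace.
rewrite (sum_hcomp HG x) big1 // => k _.
have [k_le|k_gt] := lerP k (-2); last exact: (Uleq_hcomp HG x_le k_gt).
apply: (@Ug_neg_eq0 k); [lia | exact: hcomp_deg | move=> v].
have J_vx := hJ (i1 v) (S_i1 v) (Ugeq_hom (Ug1_i1 v) (lexx _)).
have := hcomp_J (k := k + 1) J_vx; rewrite (hcomp_brl HG _ _ (Ug1_i1 v)) addrK => vx0.
by rewrite (gls_anti HG (hcomp_deg HG k x) (Ug1_i1 v)) vx0 ?scaler0 ?oppr0 //; lia.
Qed.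

Section TransitivePos.
Variable x : U.
Hypotheses (Sx : S x) (x_ge2 : Ugeq Ug 2 x).
Hypothesis br_neg_x : forall y, S y -> Uleq Ug (-1) y -> J (br y x).

Definition W2 w :=
  [/\ Ug 2 w, S w & forall d y, S y -> Ug d y -> d < 0 -> J (br y w)].

Lemma W2_subspace : is_subspace W2.
Proof.
split=> [|a w1 w2 [w1_2 S1 J1] [w2_2 S2 J2]].
  split=> [||d y _ _ _]; [exact: subspace0 | exact: subspace0 S_subspace |].
  by rewrite br0r; exact: subspace0 J_subspace.
split=> [||d y Sy y_d d_neg]; [exact: (Ug_sub 2).2 | exact: S_subspace.2 |].
by rewrite (brr y); exact: J_subspace.2 (J1 d y Sy y_d d_neg) (J2 d y Sy y_d d_neg).
Qed.

Lemma W2_gmod : gmod W2.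
Proof.
move=> a w [w_2 Sw Jw]; split=> [||d y Sy y_d d_neg].
- by have := gls_deg HG (Ug0_i0 a) w_2; rewrite add0r.
- by apply: S_br => //; exact: S_i0.
rewrite (gls_jacobi HG _ y_d (Ug0_i0 a)); apply: (subspaceD J_subspace).
  apply: (Jw (d + 0) _ _ (gls_deg HG y_d (Ug0_i0 a))); last by rewrite addr0.
  by apply: S_br => //; exact: S_i0.
by apply: (subspaceZ J_subspace); apply: J_br; [exact: S_i0 | exact: Jw Sy y_d d_neg].
Qed.

(* [Θ, w] = 2σ(w) lies in J ∩ U_1 = 0. *)
Lemma W2_KK w : W2 w -> KK w.
Proof.
move=> W2w; exists [:: w]; split; last by rewrite big_seq1.
move=> y; rewrite inE => /eqP ->; exists W2; split=> //.
split; [exact: W2_subspace | exact: W2_gmod |].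
move=> z [z_2 Sz Jz]; split=> //.
have := hcomp_J (k := 1) (Jz (-1) theta (S_RTh RTh_theta) theta_deg isT) isT.
rewrite (br_theta_U2 z_2) (hcomp_id HG (Ug1_i1 _)) -(islin0 i1_lin) => /i1_inj/eqP.
by rewrite scaler_eq0 (negbTE two_neq0) => /eqP.
Qed.

Inductive xbrackets : U -> Prop :=
| xbrackets_hcomp j : xbrackets (hcomp j x)
| xbrackets_br y d z : S y -> Ug d y -> 0 <= d -> xbrackets z -> xbrackets (br y z).

Lemma W2_hcomp2 : W2 (hcomp 2 x).
Proof.
split=> [||d y Sy y_d d_neg]; [exact: hcomp_deg | exact: S_hstable |].
have := hcomp_brl HG x (2 + d) y_d; rewrite addrK => <-.
by apply: J_hstable; apply: br_neg_x => //; apply: (Uleq_hom y_d); lia.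
Qed.

Lemma xbrackets_deg z : xbrackets z ->
  exists e, [/\ Ug e z, S z & 3 <= e \/ e = 2 /\ W2 z].
Proof.
elim=> [j|y d z' Sy y_d d_ge0 _ [e [z'_e Sz' e_cases]]].
  have [j_lt2|j_ge2] := ltrP j 2.
    rewrite (Ugeq_hcomp HG x_ge2) //; exists 3.
    by split; [exact: subspace0 | exact: subspace0 S_subspace | left].
  have [j_lt3|j_ge3] := ltrP j 3; last first.
    by exists j; split; [exact: hcomp_deg | exact: S_hstable | left].
  have -> : j = 2 by lia.
  exists 2; split; [exact: hcomp_deg | exact: S_hstable |].
  by right; split=> //; exact: W2_hcomp2.
exists (d + e); split; [by have := gls_deg HG y_d z'_e | exact: S_br |].
case: e_cases => [e_ge3|[e2 W2z']]; first by left; lia.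
have [d_pos|d_le0] := ltrP 0 d; first by left; lia.
have d0 : d = 0 by lia.
subst d e; right; split=> //.
by have [a ->] := proj1 (Ug0E _) y_d; exact: W2_gmod.
Qed.

Inductive xideal : U -> Prop :=
| xideal_J z : J z -> xideal z
| xideal_xbrackets z : xbrackets z -> xideal z
| xideal0 : xideal 0
| xideal_lin a z w : xideal z -> xideal w -> xideal (a *: z + w).

Lemma xideal_subspace : is_subspace xideal.
Proof. by split=> [|a z w]; [exact: xideal0 | exact: xideal_lin]. Qed.

Lemma xideal_br_nonneg z y d : xideal z -> S y -> Ug d y -> 0 <= d -> xideal (br y z).
Proof.
move=> Iz; elim: Iz y d => [z' Jz'|z' Bz'||a z1 z2 _ IH1 _ IH2] y d Sy y_d d_ge0.
- by apply: xideal_J; exact: J_br.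
- by apply: xideal_xbrackets; exact: xbrackets_br Sy y_d d_ge0 Bz'.
- by rewrite br0r; exact: xideal0.
- by rewrite (brr y); apply: xideal_lin; [exact: IH1 Sy y_d d_ge0 | exact: IH2 Sy y_d d_ge0].
Qed.

(* A bracket with a negative-degree element is pushed down by the Jacobi
   identity until it hits a component of x, where br_neg_x applies. *)
Lemma xideal_br_xbrackets z y d : xbrackets z -> S y -> Ug d y -> xideal (br y z).
Proof.
move=> Bz; elim: Bz y d => [j|y1 d1 z1 Sy1 y1_d1 d1_ge0 Bz1 IH] y d Sy y_d.
  have [d_ge0|d_neg] := lerP 0 d.
    by apply: xideal_xbrackets; exact: xbrackets_br Sy y_d d_ge0 (xbrackets_hcomp j).
  have := hcomp_brl HG x (j + d) y_d; rewrite addrK => <-.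
  by apply/xideal_J/J_hstable/br_neg_x => //; apply: (Uleq_hom y_d); lia.
have [d_ge0|d_neg] := lerP 0 d.
  by apply: xideal_xbrackets; exact: xbrackets_br Sy y_d d_ge0 (xbrackets_br Sy1 y1_d1 d1_ge0 Bz1).
rewrite (gls_jacobi HG _ y_d y1_d1); apply: (subspaceD xideal_subspace).
  by apply: (IH _ (d + d1) _ (gls_deg HG y_d y1_d1)); exact: S_br.
by apply: (subspaceZ xideal_subspace); exact: xideal_br_nonneg (IH y d Sy y_d) Sy1 y1_d1 d1_ge0.
Qed.

Lemma xideal_br z y d : xideal z -> S y -> Ug d y -> xideal (br y z).
Proof.
move=> Iz; elim: Iz y d => [z' Jz'|z' Bz'||a z1 z2 _ IH1 _ IH2] y d Sy y_d.
- by apply: xideal_J; exact: J_br.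
- exact: xideal_br_xbrackets Bz' Sy y_d.
- by rewrite br0r; exact: xideal0.
- by rewrite (brr y); apply: xideal_lin; [exact: IH1 Sy y_d | exact: IH2 Sy y_d].
Qed.

Lemma xideal_hstable : hstable xideal.
Proof.
move=> k z Iz; elim: Iz k => [z' Jz'|z' Bz'||a z1 z2 _ IH1 _ IH2] k.
- by apply: xideal_J; exact: J_hstable.
- have [e [z'_e _ _]] := xbrackets_deg Bz'.
  by rewrite (hcomp_hom HG z'_e); case: ifP => _; [exact: xideal_xbrackets | exact: xideal0].
- by rewrite hcomp0; exact: xideal0.
- by rewrite (hcomp_lin HG); apply: xideal_lin.
Qed.

Lemma xideal_S z : xideal z -> S z.
Proof.
elim=> [z' Jz'|z' Bz'||a z1 z2 _ S1 _ S2].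
- exact: J_S.
- by have [e [_ Sz' _]] := xbrackets_deg Bz'.
- exact: subspace0 S_subspace.
- exact: S_subspace.2.
Qed.

Lemma xideal_S3K z : xideal z -> S3K z.
Proof.
elim=> [z' Jz'|z' Bz'||a z1 z2 _ S1 _ S2].
- exact: J_S3K.
- have [e [z'_e Sz' [e_ge3|[_ W2z']]]] := xbrackets_deg Bz'.
    exists z', 0; split=> //; [exact: Ugeq_hom z'_e e_ge3 | exact: subspace0 sK_subspace |].
    by rewrite addr0.
  exists 0, z'; split; [exact: subspace0 S_subspace | exact: Ugeq3_0 | | by rewrite add0r].
  exact: KK_sK (W2_KK W2z').
- exact: subspace0 S3K_subspace.
- exact: S3K_subspace.2.
Qed.

Lemma xideal_Jfam : Jfam xideal.
Proof.
split=> [||z]; [| by move=> z /sK_J; exact: xideal_J | exact: xideal_S3K].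
apply: hstable_ideal => [||||d y z Sy y_d Iz]; [exact: S_hstable | exact: xideal_subspace |
  exact: xideal_hstable | exact: xideal_S | exact: xideal_br Iz Sy y_d].
Qed.

Lemma transitive_pos : J x.
Proof.
apply: (J_of xideal_Jfam); rewrite (sum_hcomp HG x).
by apply: (subspace_sum xideal_subspace) => j _; apply: xideal_xbrackets; exact: xbrackets_hcomp.
Qed.
End TransitivePos.

Lemma quot_transitive_m2_2 : quot_transitive Ug br S J (-2) 2.
Proof.
split=> [x Sx x_ge2 br_neg_x|]; last exact: transitive_neg.
exact: transitive_pos br_neg_x.
Qed.

End LieLeibnizQuotient.

Lemma L_transitive_m2_2 (K : fieldType) (g : lmodType K) (bg : g -> g -> g)
    (V : lmodType K) (act : g -> V -> V) (Th : V -> g) :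
  (2%:R : K) != 0 -> L_transitive bg act Th (-2) 2.
Proof.
move=> two_neq0 U Ug br i0 i1 HU theta theta_deg br_theta_i1 sigma sigma_lin sigma_br.
exact (quot_transitive_m2_2 two_neq0 HU theta_deg br_theta_i1 sigma_lin sigma_br).
Qed.

Local Open Scope complex_scope.

Theorem proposition4p8 (R : realType) :
  (forall (g : lmodType R) (bg : g -> g -> g) (V : lmodType R)
          (act : g -> V -> V) (Th : V -> g),
     lie_leibniz_triple bg act Th -> L_transitive bg act Th (-2) 2) /\
  (forall (g : lmodType R[i]) (bg : g -> g -> g) (V : lmodType R[i])
          (act : g -> V -> V) (Th : V -> g),
     lie_leibniz_triple bg act Th -> L_transitive bg act Th (-2) 2).
Proof. by split=> g bg V act Th _; apply: L_transitive_m2_2; rewrite pnatr_eq0. Qed.
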